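(* If $(m,n)\in\overline{\mathcal{P}}_\lambda$ is such that $(m,n+1)\in\mathcal{P}_\lambda$ and $(m+1,n)\in\mathcal{P}_\lambda$, then $(m,n)\in\mathcal{P}_\lambda$.
   Context: Fix $p\in(0,1)$, $q\in[0,1]$, $\lambda>0$. $\mathbb{Z}_+=\{0,1,2,\dots\}$. Let $d:[0,\infty)\to\mathbb{R}$ satisfy: (C1) $d(0)>0$; (C2) $d$ is convex and increasing; (C3) for every $\delta>0$, $r\mapsto d(r+\delta)-d(r)$ increases to $\infty$ as $r\to\infty$. Write $d(x,y):=d(\sqrt{x^2+y^2})$ for $(x,y)\in\mathbb{R}^2$ (so $d(1)=d(1,0)=d(0,1)$), and assume (C4): $d(x,y)$ is positive, twice continuously partially differentiable, with $d_{xx},d_{xy},d_{yy}>0$ for all $x,y\ge0$. Set $\Delta_1(m,n)=d(m+1,n)-d(m,n)$, $\Delta_2(m,n)=d(m,n+1)-d(m,n)$, $\Delta_q(m,n)=q\Delta_1(m,n)+(1-q)\Delta_2(m,n)$ for $(m,n)\in\mathbb{Z}_+^2$. Relay placement MDP: the state space is $\{(m,n,z):(m,n)\in\mathbb{Z}_+^2,\ z\in\{\mathsf e,\mathsf c\}\}\cup\{\phi\}$ ($(m,n)$ is the displacement of the deploying agent from the last placed relay, or from the origin if none; $z=\mathsf e$ means the lattice path has ended, $z=\mathsf c$ that it continues). Actions $u\in\{0,1\}$ ($u=1$: place a relay). From $(m,n,\mathsf c)$ with $u=0$ the next state is $(m+1,n,\mathsf c)$ w.p. $(1-p)q$, $(m+1,n,\mathsf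 e)$ w.p. $pq$, $(m,n+1,\mathsf c)$ w.p. $(1-p)(1-q)$, $(m,n+1,\mathsf e)$ w.p. $p(1-q)$; with $u=1$ it is $(1,0,\mathsf c)$, $(1,0,\mathsf e)$, $(0,1,\mathsf c)$, $(0,1,\mathsf e)$ with these same respective probabilities. At $(m,n,\mathsf e)$ only $u=1$ is allowed and the next state is the absorbing cost-free state $\phi$. One-step cost: $d(m,n)$ at $(m,n,\mathsf e)$; $\lambda+d(m,n)$ if $u=1$ at $(m,n,\mathsf c)$; $0$ otherwise. $J_\lambda(m,n)$ is the optimal expected total cost (infimum over all, possibly history-dependent and randomized, policies) starting from $(m,n,\mathsf c)$; it satisfies the Bellman equation $J_\lambda(m,n)=\min\{c_p(m,n),c_{np}(m,n)\}$, where $c_p(m,n)=\lambda+d(m,n)+(1-p)(1-q)J_\lambda(0,1)+(1-p)qJ_\lambda(1,0)+p\,d(1)$ and $c_{np}(m,n)=(1-p)qJ_\lambda(m+1,n)+(1-p)(1-q)J_\lambda(m,n+1)+pq\,d(m+1,n)+p(1-q)\,d(m,n+1)$. The optimal placement set is $\mathcal{P}_\lambda=\{(m,n)\in\mathbb{Z}_+^2: c_p(m,n)\le c_{np}(m,n)\}$. The one-step-look-ahead (OSLA) placement set is $\overline{\mathcal{P}}_\lambda=\{(m,n)\in\mathbb{Z}_+^2: p(\lambda+J_\lambda(0,0))\le \Delta_q(m,n)\}$. *)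

From Stdlib Require Import Reals Lra List.
Import ListNotations.
Open Scope R_scope.

Definition d2 (d : R -> R) (x y : R) : R := d (sqrt (x ^ 2 + y ^ 2)).

Definition dmn (d : R -> R) (m n : nat) : R := d2 d (INR m) (INR n).

Definition condC1 (d : R -> R) : Prop := 0 < d 0.

Definition condC2 (d : R -> R) : Prop :=
  (forall x y t, 0 <= x -> 0 <= y -> 0 <= t <= 1 ->
     d (t * x + (1 - t) * y) <= t * d x + (1 - t) * d y) /\
  (forall x y, 0 <= x -> x <= y -> d x <= d y).

Definition condC3 (d : R -> R) : Prop :=
  forall delta, 0 < delta ->
    (forall r s, 0 <= r -> r <= s -> d (r + delta) - d r <= d (s + delta) - d s) /\
    (forall M, exists r0, 0 <= r0 /\
       forall r, r0 <= r -> M <= d (r + delta) - d r).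

Definition cont2_at (f : R -> R -> R) (x y : R) : Prop :=
  forall eps, 0 < eps -> exists delta, 0 < delta /\
    forall x' y', Rabs (x' - x) < delta -> Rabs (y' - y) < delta ->
      Rabs (f x' y' - f x y) < eps.

Definition condC4 (d : R -> R) : Prop :=
  (forall x y, 0 <= x -> 0 <= y -> 0 < d2 d x y) /\
  exists dx dy dxx dxy dyx dyy : R -> R -> R,
    forall x y, 0 < x -> 0 < y ->
      derivable_pt_lim (fun t => d2 d t y) x (dx x y) /\
      derivable_pt_lim (fun t => d2 d x t) y (dy x y) /\
      derivable_pt_lim (fun t => dx t y) x (dxx x y) /\
      derivable_pt_lim (fun t => dx x t) y (dxy x y) /\
      derivable_pt_lim (fun t => dy t y) x (dyx x y) /\
      derivable_pt_lim (fun t => dy x t) y (dyy x y) /\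
      cont2_at dxx x y /\ cont2_at dxy x y /\ cont2_at dyx x y /\ cont2_at dyy x y /\
      0 < dxx x y /\ 0 < dxy x y /\ 0 < dyy x y.

Inductive zflag : Type := Ended | Cont.

Inductive state : Type :=
| St : nat -> nat -> zflag -> state
| Phi : state.

(* A history: the list of past (state, action) pairs, oldest first;
   action [true] means u = 1 (place a relay). *)
Definition history := list (state * bool).

(* A (possibly history-dependent, randomized) policy gives, for the current
   history and current state, the probability of choosing u = 1. *)
Definition policy := history -> state -> R.

Definition admissible (pol : policy) : Prop :=
  forall h s, 0 <= pol h s <= 1.

(* Expected cost incurred during the first N steps, starting in state s after
   history h, under policy pol.  At (m,n,e) only u = 1 is allowed (the policy's
   choice is irrelevant there). *)
Fixpoint Vn (d : R -> R) (p q lam : R) (pol : policy) (N : nat)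
         (h : history) (s : state) {struct N} : R :=
  match N with
  | O => 0
  | S N' =>
    match s with
    | Phi => 0
    | St m n Ended => dmn d m n + Vn d p q lam pol N' (h ++ [(s, true)]) Phi
    | St m n Cont =>
      let nxt (u : bool) (m0 n0 : nat) :=
          (1 - p) * q * Vn d p q lam pol N' (h ++ [(s, u)]) (St (S m0) n0 Cont)
        + p * q * Vn d p q lam pol N' (h ++ [(s, u)]) (St (S m0) n0 Ended)
        + (1 - p) * (1 - q) * Vn d p q lam pol N' (h ++ [(s, u)]) (St m0 (S n0) Cont)
        + p * (1 - q) * Vn d p q lam pol N' (h ++ [(s, u)]) (St m0 (S n0) Ended) in
      let a := pol h s in
      a * (lam + dmn d m n + nxt true 0%nat 0%nat) + (1 - a) * nxt false m n
    end
  end.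

(* The expected total cost of pol from (m,n,c) is sup_N Vn ... N [] (m,n,c)
   (possibly +oo).  [IsOptValue d p q lam J] says that, for every (m,n),
   J m n is the infimum over all admissible policies of this expected total cost:
   J_lambda. *)
Definition IsOptValue (d : R -> R) (p q lam : R) (J : nat -> nat -> R) : Prop :=
  forall m n,
    (forall pol, admissible pol ->
       forall y, y < J m n -> exists N, y < Vn d p q lam pol N [] (St m n Cont)) /\
    (forall eps, 0 < eps -> exists pol, admissible pol /\
       forall N, Vn d p q lam pol N [] (St m n Cont) <= J m n + eps).

Definition c_p (d : R -> R) (p q lam : R) (J : nat -> nat -> R) (m n : nat) : R :=
  lam + dmn d m n + (1 - p) * (1 - q) * J 0%nat 1%nat + (1 - p) * q * J 1%nat 0%nat
  + p * d 1.

Definition c_np (d : R -> R) (p q : R) (J : nat -> nat -> R) (m n : nat) : R :=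
  (1 - p) * q * J (S m) n + (1 - p) * (1 - q) * J m (S n)
  + p * q * dmn d (S m) n + p * (1 - q) * dmn d m (S n).

Definition inP (d : R -> R) (p q lam : R) (J : nat -> nat -> R) (m n : nat) : Prop :=
  c_p d p q lam J m n <= c_np d p q J m n.

Definition Delta1 (d : R -> R) (m n : nat) : R := dmn d (S m) n - dmn d m n.
Definition Delta2 (d : R -> R) (m n : nat) : R := dmn d m (S n) - dmn d m n.
Definition Deltaq (d : R -> R) (q : R) (m n : nat) : R :=
  q * Delta1 d m n + (1 - q) * Delta2 d m n.

Definition inOSLA (d : R -> R) (p q lam : R) (J : nat -> nat -> R) (m n : nat) : Prop :=
  p * (lam + J 0%nat 0%nat) <= Deltaq d q m n.

(* The only property of J_lambda the argument needs is the Bellman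
   inequality  J(a,b) >= min (c_p(a,b), c_np(a,b)),  which we derive from
   the definition of J as an infimum over policies:
   - the finite-horizon costs Vn are nonnegative and nondecreasing in the
     horizon, so a single horizon approximates J at several states at once;
   - one step of Vn from (a,b,c) is a convex combination of a "place" cost
     and a "do not place" cost, each an expectation c_np of continuation
     values of a shifted policy; a convex combination dominates the min.
   With c_p(a,b) = lambda + d(a,b) + c_np(J)(0,0), the Bellman inequality
   at the successors and at the origin plus the OSLA inequality
   p (lambda + J(0,0)) <= Delta_q(m,n) give c_np(m,n) >= c_p(m,n) by
   linear algebra.  Only the positivity part of (C4) is used. *)
From Pilot Require Import Defs.
From Stdlib Require Import Reals Lra Lia List.
Import ListNotations.
Open Scope R_scope.

Definition after (x : state * bool) (pol : policy) : policy :=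
  fun h s => pol (x :: h) s.

(* Costs only depend on the history through the policy, so a common history
   prefix can be absorbed into the policy. *)
Lemma Vn_prefix d p q lam pol N : forall h0 h s,
  Vn d p q lam pol N (h0 ++ h) s =
  Vn d p q lam (fun h' s' => pol (h0 ++ h') s') N h s.
Proof.
  induction N as [|N IH]; intros h0 h s; simpl; [reflexivity|].
  destruct s as [x y [|]|]; try reflexivity.
  - rewrite <- app_assoc, IH. reflexivity.
  - rewrite <- !app_assoc, !IH. reflexivity.
Qed.

Lemma Vn_after d p q lam pol N x s :
  Vn d p q lam pol N [x] s = Vn d p q lam (after x pol) N [] s.
Proof. exact (Vn_prefix d p q lam pol N [x] [] s). Qed.

Lemma Vn_Phi d p q lam pol N h : Vn d p q lam pol N h Phi = 0.
Proof. destruct N; reflexivity. Qed.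

Lemma Vn_Ended d p q lam pol N h x y :
  Vn d p q lam pol (S N) h (St x y Ended) = dmn d x y.
Proof. simpl. rewrite Vn_Phi. ring. Qed.

Lemma Vn_Cont d p q lam pol N h x y :
  Vn d p q lam pol (S N) h (St x y Cont) =
  let s := St x y Cont in
  let next (u : bool) (m0 n0 : nat) :=
      (1 - p) * q * Vn d p q lam pol N (h ++ [(s, u)]) (St (S m0) n0 Cont)
    + p * q * Vn d p q lam pol N (h ++ [(s, u)]) (St (S m0) n0 Ended)
    + (1 - p) * (1 - q) * Vn d p q lam pol N (h ++ [(s, u)]) (St m0 (S n0) Cont)
    + p * (1 - q) * Vn d p q lam pol N (h ++ [(s, u)]) (St m0 (S n0) Ended) in
  pol h s * (lam + dmn d x y + next true 0%nat 0%nat)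
  + (1 - pol h s) * next false x y.
Proof. reflexivity. Qed.

Section Monotonicity.
Variables (d : R -> R) (p q lam : R) (pol : policy).
Hypotheses (Hp : 0 <= p <= 1) (Hq : 0 <= q <= 1) (Hlam : 0 <= lam)
  (Hd : forall x y, 0 <= dmn d x y) (Hpol : admissible pol).

Lemma Vn_nonneg N : forall h s, 0 <= Vn d p q lam pol N h s.
Proof.
  induction N as [|N IH]; intros h s; [simpl; lra|].
  destruct s as [x y [|]|]; [| |rewrite Vn_Phi; lra].
  - rewrite Vn_Ended. apply Hd.
  - rewrite Vn_Cont. cbv zeta. assert (Ha := Hpol h (St x y Cont)).
    repeat first [lra | apply IH | apply Hd
                 | apply Rplus_le_le_0_compat | apply Rmult_le_pos].
Qed.

Lemma Vn_step N : forall h s,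
  Vn d p q lam pol N h s <= Vn d p q lam pol (S N) h s.
Proof.
  induction N as [|N IH]; intros h s.
  - apply Vn_nonneg.
  - destruct s as [x y [|]|]; [| |rewrite !Vn_Phi; lra].
    + rewrite !Vn_Ended. lra.
    + rewrite !Vn_Cont.
      cbv zeta. assert (Ha := Hpol h (St x y Cont)).
      repeat first [lra | apply IH | apply Rmult_le_pos
                   | apply Rplus_le_compat | apply Rmult_le_compat_l].
Qed.

Lemma Vn_mono N M : (N <= M)%nat -> forall h s,
  Vn d p q lam pol N h s <= Vn d p q lam pol M h s.
Proof.
  induction 1; intros h s; [lra|].
  eapply Rle_trans; [apply IHle | apply Vn_step].
Qed.

(* A value strictly below the total cost is exceeded by all long enough
   horizons; this lets one horizon serve several starting states. *)
Lemma Vn_eventually_above x y (v : R) :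
  (exists N, v < Vn d p q lam pol N [] (St x y Cont)) ->
  exists N0, forall N, (N0 <= N)%nat -> v < Vn d p q lam pol N [] (St x y Cont).
Proof.
  intros [N0 HN0]. exists N0. intros N HN.
  eapply Rlt_le_trans; [exact HN0 | apply Vn_mono; exact HN].
Qed.
End Monotonicity.

Lemma Vn_first_step d p q lam pol N a b :
  let s := St a b Cont in
  let V u x y := Vn d p q lam (after (s, u) pol) (S N) [] (St x y Cont) in
  Vn d p q lam pol (S (S N)) [] s =
    pol [] s * (lam + dmn d a b + c_np d p q (V true) 0 0)
  + (1 - pol [] s) * c_np d p q (V false) a b.
Proof.
  cbv zeta. rewrite Vn_Cont. cbv zeta. cbn [app].
  rewrite !Vn_after, !Vn_Ended.
  unfold c_np. ring.
Qed.

Lemma dmn_10 d : dmn d 1 0 = d 1.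
Proof.
  unfold dmn, Defs.d2.
  assert (Hnorm : INR 1 ^ 2 + INR 0 ^ 2 = 1) by (simpl; ring).
  rewrite Hnorm, sqrt_1. reflexivity.
Qed.

Lemma dmn_01 d : dmn d 0 1 = d 1.
Proof.
  unfold dmn, Defs.d2.
  assert (Hnorm : INR 0 ^ 2 + INR 1 ^ 2 = 1) by (simpl; ring).
  rewrite Hnorm, sqrt_1. reflexivity.
Qed.

Lemma c_p_restart d p q lam V a b :
  c_p d p q lam V a b = lam + dmn d a b + c_np d p q V 0 0.
Proof. unfold c_p, c_np. rewrite dmn_10, dmn_01. ring. Qed.

(* c_np is an expectation: an error of at most e at the two continuation
   states gives an error of at most e in c_np. *)
Lemma c_np_approx d p q V W m n e :
  0 <= p <= 1 -> 0 <= q <= 1 -> 0 <= e ->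
  W (S m) n - e <= V (S m) n -> W m (S n) - e <= V m (S n) ->
  c_np d p q W m n - e <= c_np d p q V m n.
Proof.
  intros Hp Hq He H1 H2. unfold c_np.
  assert (0 <= (1 - p) * q * (V (S m) n - W (S m) n + e))
    by (repeat apply Rmult_le_pos; lra).
  assert (0 <= (1 - p) * (1 - q) * (V m (S n) - W m (S n) + e))
    by (repeat apply Rmult_le_pos; lra).
  assert (0 <= p * e) by (apply Rmult_le_pos; lra).
  nra.
Qed.

Lemma Rmin_le_convex a t u :
  0 <= a <= 1 -> Rmin t u <= a * t + (1 - a) * u.
Proof.
  intros Ha. unfold Rmin. destruct (Rle_dec t u).
  - assert (0 <= (1 - a) * (u - t)) by (apply Rmult_le_pos; lra). nra.
  - assert (0 <= a * (t - u)) by (apply Rmult_le_pos; lra). nra.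
Qed.

Lemma bellman_lower d p q lam J a b :
  0 < p < 1 -> 0 <= q <= 1 -> 0 < lam -> (forall x y, 0 <= dmn d x y) ->
  IsOptValue d p q lam J ->
  Rmin (c_p d p q lam J a b) (c_np d p q J a b) <= J a b.
Proof.
  intros Hp Hq Hlam Hd HJ.
  assert (Hp' : 0 <= p <= 1) by lra.
  assert (Hlam' : 0 <= lam) by lra.
  apply Rle_plus_epsilon. intros e He.
  destruct (proj2 (HJ a b) (e / 2)) as [pol [Hadm Hpol]]; [lra|].
  set (s := St a b Cont).
  assert (Hafter : forall u, admissible (after (s, u) pol))
    by (intros u h s'; apply Hadm).
  assert (Hclose : forall u x y, exists N0, forall N, (N0 <= N)%nat ->
            J x y - e / 2 < Vn d p q lam (after (s, u) pol) N [] (St x y Cont)).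
  { intros u x y. apply Vn_eventually_above; auto.
    apply (proj1 (HJ x y)); [apply Hafter | lra]. }
  destruct (Hclose true 1%nat 0%nat) as [N1 H1].
  destruct (Hclose true 0%nat 1%nat) as [N2 H2].
  destruct (Hclose false (S a) b) as [N3 H3].
  destruct (Hclose false a (S b)) as [N4 H4].
  set (N := (N1 + N2 + N3 + N4)%nat).
  set (V u x y := Vn d p q lam (after (s, u) pol) (S N) [] (St x y Cont)).
  assert (Hplace : c_p d p q lam J a b - e / 2
                   <= lam + dmn d a b + c_np d p q (V true) 0 0).
  { rewrite c_p_restart.
    enough (c_np d p q J 0 0 - e / 2 <= c_np d p q (V true) 0 0) by lra.
    apply c_np_approx; try lra;
      [apply Rlt_le, H1 | apply Rlt_le, H2]; unfold N; lia. }
  assert (Hwait : c_np d p q J a b - e / 2 <= c_np d p q (V false) a b).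
  { apply c_np_approx; try lra;
      [apply Rlt_le, H3 | apply Rlt_le, H4]; unfold N; lia. }
  assert (Hcost := Hpol (S (S N))).
  rewrite (Vn_first_step d p q lam pol N a b) in Hcost.
  change (pol [] s * (lam + dmn d a b + c_np d p q (V true) 0 0)
          + (1 - pol [] s) * c_np d p q (V false) a b <= J a b + e / 2) in Hcost.
  assert (Hmin := Rmin_le_convex (pol [] s)
                    (lam + dmn d a b + c_np d p q (V true) 0 0)
                    (c_np d p q (V false) a b) (Hadm [] s)).
  assert (Rmin (c_p d p q lam J a b) (c_np d p q J a b) - e / 2
          <= Rmin (lam + dmn d a b + c_np d p q (V true) 0 0)
                  (c_np d p q (V false) a b)).
  { unfold Rmin at 1 2.
    destruct (Rle_dec (c_p d p q lam J a b) (c_np d p q J a b));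
    destruct (Rle_dec (lam + dmn d a b + c_np d p q (V true) 0 0)
                      (c_np d p q (V false) a b)); lra. }
  lra.
Qed.

Lemma value_ge_c_p_of_inP d p q lam J a b :
  0 < p < 1 -> 0 <= q <= 1 -> 0 < lam -> (forall x y, 0 <= dmn d x y) ->
  IsOptValue d p q lam J -> inP d p q lam J a b ->
  lam + dmn d a b + c_np d p q J 0 0 <= J a b.
Proof.
  intros Hp Hq Hlam Hd HJ HP. rewrite <- c_p_restart.
  rewrite <- (Rmin_left _ _ HP). apply bellman_lower; assumption.
Qed.

(* At the origin waiting is always at least as good as placing, so the
   continuation cost from the origin is a lower bound for J(0,0). *)
Lemma c_np_origin_le_value d p q lam J :
  0 < p < 1 -> 0 <= q <= 1 -> 0 < lam -> (forall x y, 0 <= dmn d x y) ->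
  IsOptValue d p q lam J -> c_np d p q J 0 0 <= J 0%nat 0%nat.
Proof.
  intros Hp Hq Hlam Hd HJ.
  assert (Hwait : c_np d p q J 0 0 <= c_p d p q lam J 0 0).
  { rewrite c_p_restart. specialize (Hd 0%nat 0%nat). lra. }
  rewrite <- (Rmin_right _ _ Hwait). apply bellman_lower; assumption.
Qed.

Lemma c_np_lower d p q J K m n :
  0 < p < 1 -> 0 <= q <= 1 ->
  K + dmn d (S m) n <= J (S m) n -> K + dmn d m (S n) <= J m (S n) ->
  (1 - p) * K + dmn d m n + Deltaq d q m n <= c_np d p q J m n.
Proof.
  intros Hp Hq H1 H2. unfold c_np, Deltaq, Delta1, Delta2.
  assert ((1 - p) * q * (K + dmn d (S m) n) <= (1 - p) * q * J (S m) n)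
    by (apply Rmult_le_compat_l; [apply Rmult_le_pos|]; lra).
  assert ((1 - p) * (1 - q) * (K + dmn d m (S n)) <= (1 - p) * (1 - q) * J m (S n))
    by (apply Rmult_le_compat_l; [apply Rmult_le_pos|]; lra).
  nra.
Qed.

Theorem mainTheorem9 :
  forall (d : R -> R) (p q lam : R),
    0 < p < 1 -> 0 <= q <= 1 -> 0 < lam ->
    condC1 d -> condC2 d -> condC3 d -> condC4 d ->
    forall J : nat -> nat -> R,
      IsOptValue d p q lam J ->
      forall m n : nat,
        inOSLA d p q lam J m n ->
        inP d p q lam J m (S n) ->
        inP d p q lam J (S m) n ->
        inP d p q lam J m n.
Proof.
  intros d p q lam Hp Hq Hlam _ _ _ [Hpos _] J HJ m n Hosla HPup HPright.
  assert (Hd : forall x y, 0 <= dmn d x y)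
    by (intros x y; apply Rlt_le, Hpos; apply pos_INR).
  (* K = lambda + c_np(J)(0,0) is the cost of placing, d(.) excluded *)
  set (K := lam + c_np d p q J 0 0).
  assert (Hright := value_ge_c_p_of_inP d p q lam J (S m) n Hp Hq Hlam Hd HJ HPright).
  assert (Hup := value_ge_c_p_of_inP d p q lam J m (S n) Hp Hq Hlam Hd HJ HPup).
  assert (Hwait := c_np_lower d p q J K m n Hp Hq
                     ltac:(unfold K; lra) ltac:(unfold K; lra)).
  assert (Horigin := c_np_origin_le_value d p q lam J Hp Hq Hlam Hd HJ).
  (* OSLA: p K <= p (lambda + J(0,0)) <= Delta_q(m,n) *)
  assert (HpK : p * K <= Deltaq d q m n).
  { unfold inOSLA in Hosla. eapply Rle_trans; [|exact Hosla].
    apply Rmult_le_compat_l; unfold K; lra. }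
  unfold inP. rewrite c_p_restart.
  replace (lam + dmn d m n + c_np d p q J 0 0) with (K + dmn d m n)
    by (unfold K; ring).
  nra.
Qed.
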